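(* Let $n,m,\ell$ be integers with $n-1\ge m\ge \ell\ge 0$. Then \begin{align*} &\mathfrak Z_n(1^{\{m\}})\,\mathfrak Z_n((-1)^{\{\ell\}})\\ &=\binom{n-m+\ell-1}{n-m-1}\mathfrak Z_n(1^{\{m-\ell\}})+\Big(\prod_{r=1}^{n-1}(1-\zeta_n^r)\Big)\sum_{j=0}^{n-m-2}\binom{n-m+\ell-3-2j}{\ell-1-j}\mathcal Y_n\big(2^{\{m-\ell+1+j\}},1^{\{n-m+\ell-3-2j\}}\big). \end{align*}
   Context: Let $\zeta_n=e^{2\pi\sqrt{-1}/n}$. For integers $s_1,\dots,s_m$ (negative values allowed), define $\mathfrak Z_n(s_1,\dots,s_m):=\sum_{1\le i_1<\cdots<i_m\le n-1}\prod_{k=1}^{m}(1-\zeta_n^{i_k})^{-s_k}$ (equal to $1$ if $m=0$ and to $0$ if $m>n-1$). Define $\mathcal Y_n(s_1,\dots,s_m):=\sum_{\sigma}\mathfrak Z_n(\sigma)$, where $\sigma$ runs over all distinct rearrangements of $(s_1,\dots,s_m)$; $\mathcal Y_n$ of the empty sequence is $1$. Notation: $a^{\{k\}}$ denotes the block $a,\dots,a$ of length $k$ (so $(-1)^{\{\ell\}}$ is $-1,\dots,-1$ repeated $\ell$ times); any $\mathcal Y_n$ term in which some block has negative length is interpreted as $0$. Binomial coefficients $\binom{a}{b}$ are $0$ when $b<0$ or $b>a\ge 0$. *)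

From HB Require Import structures.
From mathcomp Require Import all_boot all_order all_algebra.
From mathcomp Require Import complex.
From mathcomp Require Import reals trigo.
Set Implicit Arguments.
Unset Strict Implicit.
Unset Printing Implicit Defensive.
Import Order.TTheory GRing.Theory Num.Theory.
Local Open Scope ring_scope.
Local Open Scope complex_scope.

Section Defs.
Variable R : realType.

Definition zeta (n : nat) : R[i] :=
  (cos (2 * pi / n%:R)) +i* (sin (2 * pi / n%:R)).

(* Zaux n lo s = sum over lo <= i_1 < ... < i_m <= n-1 of
   prod_k (1 - zeta_n^{i_k})^{-s_k}  (s = [:: s_1; ...; s_m]) *)
Fixpoint Zaux (n lo : nat) (s : seq int) : R[i] :=
  match s with
  | [::] => 1
  | a :: s' => \sum_(lo <= i < n) (1 - zeta n ^+ i) ^ (- a) * Zaux n i.+1 s'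
  end.

Definition Zn (n : nat) (s : seq int) : R[i] := Zaux n 1 s.

(* cal Y_n(s): sum over distinct rearrangements of s
   ([permutations s] is the duplicate-free list of all permutations of s) *)
Definition Yn (n : nat) (s : seq int) : R[i] :=
  \sum_(t <- permutations s) Zn n t.

End Defs.

(* With x_r = 1 - zeta^r (1 <= r <= N = n - 1), Z(1^m) and Z((-1)^l) are the
   elementary symmetric functions e_m(1/x) and e_l(x), and e_l(x) is
   (x_1 ... x_N) e_(N-l)(1/x).  By Pieri's rule e_m(y) e_k(y) is a sum of the
   monomial sums Y(2^i 1^(m+k-2i)) weighted by C(m+k-2i, m-i).  For k = N - l the
   terms with i < m - l involve more than N variables and vanish, the term
   i = m - l is (x_1 ... x_N)^-1 e_(m-l)(1/x), and the others form the sum over j. *)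

From HB Require Import structures.
From mathcomp Require Import all_boot all_order all_algebra.
From mathcomp Require Import complex.
From mathcomp Require Import reals trigo.
From mathcomp Require Import zify ring lra.
Set Implicit Arguments. Unset Strict Implicit. Unset Printing Implicit Defensive.
Import Order.TTheory GRing.Theory Num.Theory.
Local Open Scope ring_scope.

Section Zsums.
Variable F : fieldType.
Implicit Types (vs : seq F) (s : seq int).

(* [Zsum vs s] is [Zn] with the entries of [vs] in place of the 1 - zeta^i:
   the sum over increasing i_1 < ... < i_m of the products of vs_(i_k)^(-s_k). *)
Fixpoint Zsum vs s {struct vs} : F :=
  match s, vs with
  | [::], _ => 1
  | _ :: _, [::] => 0
  | a :: s', v :: vs' => v ^ (- a) * Zsum vs' s' + Zsum vs' s
  end.

Lemma Zsum_nill s : Zsum [::] s = (s == [::])%:R.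
Proof. by case: s. Qed.

Lemma Zsum_nilr vs : Zsum vs [::] = 1.
Proof. by case: vs. Qed.

Lemma Zsum_cons v vs s :
  Zsum (v :: vs) s = (if s is a :: s' then v ^ (- a) * Zsum vs s' else 0) + Zsum vs s.
Proof. by case: s => [|a s] //=; rewrite add0r; case: vs. Qed.

Lemma Zsum_cons_nseq1 v vs k :
  Zsum (v :: vs) (nseq k.+1 1%Z) = v^-1 * Zsum vs (nseq k 1%Z) + Zsum vs (nseq k.+1 1%Z).
Proof. by []. Qed.

Lemma Zsum_cons_nseqN1 v vs k :
  Zsum (v :: vs) (nseq k.+1 (-1)%Z) = v * Zsum vs (nseq k (-1)%Z) + Zsum vs (nseq k.+1 (-1)%Z).
Proof. by rewrite /= expr1z. Qed.

Lemma Zsum_oversize vs s : (size vs < size s)%N -> Zsum vs s = 0.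
Proof.
elim: vs s => [|v vs IH] [|a s] //= Hs.
by rewrite !IH ?mulr0 ?addr0 //=; lia.
Qed.

Lemma Zsum_nseqN1 vs l : {in vs, forall v, v != 0} -> (l <= size vs)%N ->
  Zsum vs (nseq l (-1)%Z) = (\prod_(v <- vs) v) * Zsum vs (nseq (size vs - l) 1%Z).
Proof.
elim: vs l => [|v vs IH] l Hnz Hl; first by case: l Hl => // _; rewrite big_nil mulr1.
have Hv : v != 0 by apply: Hnz; rewrite inE eqxx.
have {}IH k : (k <= size vs)%N ->
    Zsum vs (nseq k (-1)%Z) = (\prod_(w <- vs) w) * Zsum vs (nseq (size vs - k) 1%Z).
  by apply: IH => w Hw; apply: Hnz; rewrite inE Hw orbT.
rewrite big_cons; case: l Hl => [|l] Hl.
  rewrite subn0 Zsum_cons_nseq1 [Zsum vs (nseq _.+1 _)]Zsum_oversize ?size_nseq //.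
  rewrite addr0 mulrACA mulfV // mul1r Zsum_nilr.
  by have := IH 0%N (leq0n _); rewrite subn0 Zsum_nilr.
rewrite Zsum_cons_nseqN1 subSS; case: (ltnP l (size vs)) => Hls.
  rewrite !IH // subnS; case Hd: (size vs - l)%N => [|d]; first lia.
  by rewrite Zsum_cons_nseq1 mulrDr addrC !mulrA [v * _]mulrC mulfK.
have -> : l = size vs by move: Hl => /=; lia.
rewrite subnn [Zsum vs (nseq _.+1 _)]Zsum_oversize ?size_nseq // addr0 IH //.
by rewrite subnn !Zsum_nilr mulrA.
Qed.

Definition Ysum vs s := \sum_(t <- permutations s) Zsum vs t.

Lemma Ysum_perm vs s1 s2 : perm_eq s1 s2 -> Ysum vs s1 = Ysum vs s2.
Proof. by move=> Hs; apply: perm_big; apply: perm_permutations. Qed.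

Lemma Ysum_nill s : (0 < size s)%N -> Ysum [::] s = 0.
Proof.
move=> Hs; rewrite /Ysum big1_seq // => t /andP[_].
by rewrite mem_permutations => /perm_size; case: t => [|a t] //= Hst; rewrite -Hst in Hs.
Qed.

Lemma Ysum_cons v vs s : (0 < size s)%N ->
  Ysum (v :: vs) s = \sum_(x <- undup s) v ^ (- x) * Ysum vs (rem x s) + Ysum vs s.
Proof.
move=> Hs; rewrite /Ysum; under eq_bigr do rewrite Zsum_cons.
rewrite big_split /= (perm_big _ (permutationsE Hs)) big_allpairs_dep /=.
by congr (_ + _); apply: eq_bigr => x _; rewrite mulr_sumr.
Qed.

Fixpoint Ysum21 vs (i d : nat) : F :=
  match vs with
  | [::] => ((i == 0%N) && (d == 0%N))%:R
  | v :: vs' => (if i is i'.+1 then v^-1 ^+ 2 * Ysum21 vs' i' d else 0)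
               + (if d is d'.+1 then v^-1 * Ysum21 vs' i d' else 0) + Ysum21 vs' i d
  end.

Lemma Ysum21_0 vs k : Ysum21 vs 0 k = Zsum vs (nseq k 1%Z).
Proof.
elim: vs k => [|v vs IH] [|k] //=; first by rewrite IH !add0r Zsum_nilr.
by rewrite !IH add0r.
Qed.

Lemma Ysum21_oversize vs i d : (size vs < i + d)%N -> Ysum21 vs i d = 0.
Proof.
elim: vs i d => [|v vs IH] [|i] [|d] //= Hid; rewrite ?IH ?mulr0 ?addr0 //; lia.
Qed.

Lemma rem1_nseq21 p q :
  perm_eq (rem 1%Z (nseq p 2%Z ++ nseq q.+1 1%Z)) (nseq p 2%Z ++ nseq q 1%Z).
Proof.
have H1 : 1%Z \in nseq p 2%Z ++ nseq q.+1 1%Z by rewrite mem_cat orbC mem_nseq eqxx.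
rewrite -(perm_cons 1%Z) -(permPl (perm_to_rem H1)).
by rewrite -[nseq q.+1 _]/([:: 1%Z] ++ nseq q 1%Z) perm_catCA.
Qed.

Lemma Ysum_nseq21 vs p q : Ysum vs (nseq p 2%Z ++ nseq q 1%Z) = Ysum21 vs p q.
Proof.
elim: vs p q => [|v vs IH] p q.
  case: p => [|p]; case: q => [|q]; first by rewrite /Ysum /= big_seq1.
  1-3: by rewrite Ysum_nill ?size_cat ?size_nseq.
case: p => [|p]; case: q => [|q]; first by rewrite /Ysum /= big_seq1 !add0r Ysum21_0 Zsum_nilr.
all: rewrite Ysum_cons ?size_cat ?size_nseq // IH [RHS]/= ?add0r ?addr0; congr (_ + _).
- have -> : undup (nseq q.+1 1%Z) = [:: 1%Z] by elim: q => //= q ->; rewrite mem_seq1.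
  by rewrite big_seq1 (Ysum_perm _ (rem1_nseq21 0 q)) IH.
- have -> : undup (nseq p.+1 2%Z ++ [::]) = [:: 2%Z].
    by rewrite cats0; elim: p => //= p ->; rewrite mem_seq1.
  by rewrite big_seq1 /= -[nseq p 2%Z ++ [::]]/(nseq p 2%Z ++ nseq 0 1%Z) IH exprVn.
- have Hu : perm_eq (undup (nseq p.+1 2%Z ++ nseq q.+1 1%Z)) [:: 2%Z; 1%Z].
    apply: uniq_perm; rewrite ?undup_uniq // => x.
    by rewrite mem_undup mem_cat !mem_nseq /= !inE.
  rewrite (perm_big _ Hu) big_cons big_seq1 (Ysum_perm _ (rem1_nseq21 p.+1 q)).
  by rewrite [rem _ _]/= -[1%Z :: nseq q 1%Z]/(nseq q.+1 1%Z) !IH exprVn.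
Qed.

Lemma Ysum21_full vs i d : {in vs, forall v, v != 0} -> (i + d = size vs)%N ->
  (\prod_(v <- vs) v) * Ysum21 vs i d = Zsum vs (nseq i 1%Z).
Proof.
elim: vs i d => [|v vs IH] i d Hnz Hid.
  by case: i d Hid => [|i] [|d] //= _; rewrite big_nil mul1r.
have Hv : v != 0 by apply: Hnz; rewrite inE eqxx.
have {}IH i' d' : (i' + d')%N = size vs ->
    (\prod_(w <- vs) w) * Ysum21 vs i' d' = Zsum vs (nseq i' 1%Z).
  by apply: IH => w Hw; apply: Hnz; rewrite inE Hw orbT.
rewrite [size _]/= in Hid; rewrite big_cons [Ysum21 (v :: vs) _ _]/=.
rewrite (@Ysum21_oversize vs i d) ?addr0; last by lia.
set P := \prod_(w <- vs) w.
have Hstep X Y : v * P * (v^-1 ^+ 2 * X + v^-1 * Y) = v^-1 * (P * X) + P * Y.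
  by field.
case: i Hid => [|i] Hid; case: d Hid => [|d] Hid //.
- rewrite add0r mulrACA mulfV // mul1r IH; last by lia.
  by case: (vs).
- have := Hstep (Ysum21 vs i 0) 0; rewrite !mulr0 !addr0 => ->; rewrite IH; last by lia.
  by rewrite Zsum_cons_nseq1 [Zsum vs (nseq i.+1 _)]Zsum_oversize ?size_nseq ?addr0 //; lia.
- by rewrite Hstep !IH //; lia.
Qed.

(* The i variables shared by both factors appear squared, the other m + k - 2i
   are distributed between the factors. *)
Definition pieri_coef (m k i : nat) : nat :=
  if (i <= m)%N && (i <= k)%N then 'C(m + k - 2 * i, m - i) else 0%N.

Lemma pieri_coefSS m k i : pieri_coef m.+1 k.+1 i.+1 = pieri_coef m k i.
Proof.
rewrite /pieri_coef !ltnS subSS.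
by have -> : (m.+1 + k.+1 - 2 * i.+1 = m + k - 2 * i)%N by lia.
Qed.

Lemma pieri_coef0n k i : pieri_coef 0 k i = (i == 0%N).
Proof. by case: i => [|i]; rewrite /pieri_coef /= ?bin0. Qed.

Lemma pieri_coefn0 m i : pieri_coef m 0 i = (i == 0%N).
Proof. by case: i => [|i]; rewrite /pieri_coef /= ?addn0 ?subn0 ?binn ?andbF. Qed.

Lemma pieri_coef_pascal m k i : (2 * i < m + k + 2)%N ->
  pieri_coef m.+1 k.+1 i = (pieri_coef m k.+1 i + pieri_coef m.+1 k i)%N.
Proof.
rewrite /pieri_coef => Hi.
have [[Hm Hk]|[[-> Hkm]|[[-> Hmk]|Hout]]] : ((i <= m)%N /\ (i <= k)%N)
   \/ (i = k.+1 /\ (k < m)%N) \/ (i = m.+1 /\ (m < k)%N) \/ ((m.+1 < i)%N \/ (k.+1 < i)%N).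
  by lia.
- have -> : (i <= m.+1)%N && (i <= k.+1)%N by lia.
  have -> : (i <= m)%N && (i <= k.+1)%N by lia.
  have -> : (i <= m.+1)%N && (i <= k)%N by lia.
  have -> : (m.+1 + k.+1 - 2 * i = (m + k.+1 - 2 * i).+1)%N by lia.
  have -> : (m.+1 - i = (m - i).+1)%N by lia.
  by rewrite binS addnC; congr (_ + _)%N; congr 'C(_, _); lia.
- rewrite Hkm leqnn ltnn ltnW // andbF addn0 /=.
  have -> : (m.+1 + k.+1 - 2 * k.+1 = m.+1 - k.+1)%N by lia.
  have -> : (m + k.+1 - 2 * k.+1 = m - k.+1)%N by lia.
  by rewrite !binn.
- by rewrite leqnn ltnn Hmk ltnW //= subnn !bin0.
- have -> : (i <= m.+1)%N && (i <= k.+1)%N = false by lia.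
  have -> : (i <= m)%N && (i <= k.+1)%N = false by lia.
  by have -> : (i <= m.+1)%N && (i <= k)%N = false by lia.
Qed.

Lemma pieri_coef_gt m k i : (m + k < 2 * i)%N -> pieri_coef m k i = 0%N.
Proof. by rewrite /pieri_coef => Hi; case: ifP => //; lia. Qed.

Lemma big_ord_eq0_mul K (f : nat -> F) : (0 < K)%N ->
  \sum_(i < K) ((i : nat) == 0%N)%:R * f i = f 0%N.
Proof.
by case: K => // K _; rewrite big_ord_recl mul1r big1 ?addr0 // => i _; rewrite mul0r.
Qed.

Lemma Zsum_nseq1_mul vs m k K : (m < K)%N ->
  Zsum vs (nseq m 1%Z) * Zsum vs (nseq k 1%Z) =
  \sum_(i < K) (pieri_coef m k i)%:R * Ysum21 vs i (m + k - 2 * i).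
Proof.
elim: vs m k K => [|v vs IH] m k K HK.
  case: K HK => // K _; rewrite big_ord_recl big1 ?addr0 => [|i _]; last by rewrite /= mulr0.
  rewrite !Zsum_nill /pieri_coef /= muln0 subn0.
  by case: m k => [|m] [|k]; rewrite /= ?addnS ?mulr0 ?mul0r ?mulr1 ?bin0.
case: m HK => [|m] HK.
  under eq_bigr do rewrite pieri_coef0n.
  rewrite (big_ord_eq0_mul (fun i => Ysum21 _ i (0 + k - 2 * i))) //.
  by rewrite add0n muln0 subn0 Ysum21_0 Zsum_nilr mul1r.
case: k => [|k].
  under eq_bigr do rewrite pieri_coefn0.
  rewrite (big_ord_eq0_mul (fun i => Ysum21 _ i (m.+1 + 0 - 2 * i))) 1?(leq_ltn_trans _ HK) //.
  by rewrite addn0 muln0 subn0 Ysum21_0 Zsum_nilr mulr1.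
case: K HK => // K HK.
rewrite !Zsum_cons_nseq1.
have -> : forall y A A' B B' : F,
    (y * A + A') * (y * B + B') = y ^+ 2 * (A * B) + y * (A * B' + A' * B) + A' * B'.
  by move=> y A A' B B'; ring.
rewrite (IH m k K) ?(IH _ _ K.+1) //; try lia.
rewrite -!big_split /=.
under [RHS]eq_bigr do rewrite !mulrDr.
rewrite !big_split /=; congr (_ + _ + _).
  rewrite big_ord_recl /= mulr0 add0r mulr_sumr; apply: eq_bigr => i _.
  rewrite /bump /= add1n pieri_coefSS mulrCA.
  by have -> : (m.+1 + k.+1 - 2 * i.+1 = m + k - 2 * i)%N by lia.
rewrite -big_split mulr_sumr; apply: eq_bigr => i _ /=.
case HD: (m.+1 + k.+1 - 2 * i)%N => [|d].
  by rewrite (@pieri_coef_gt m k.+1 i) ?(@pieri_coef_gt m.+1 k i) ?mul0r ?addr0 ?mulr0 //; lia.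
rewrite pieri_coef_pascal; last by lia.
have -> : (m + k.+1 - 2 * i = d)%N by lia.
have -> : (m.+1 + k - 2 * i = d)%N by lia.
by rewrite natrD mulrDl mulrDr !(mulrCA v^-1).
Qed.

Lemma pieri_coef_tail N m l j : (l <= m)%N -> (j < N - m)%N ->
  pieri_coef m (N - l) (m - l + 1 + j) =
  if (j < l)%N then 'C(N - m + l - 2 - 2 * j, l - 1 - j) else 0%N.
Proof.
move=> Hlm Hj; rewrite /pieri_coef; have [Hjl|Hlj] := ltnP j l.
  have -> : (m - l + 1 + j <= m)%N && (m - l + 1 + j <= N - l)%N by lia.
  have -> : (m + (N - l) - 2 * (m - l + 1 + j) = N - m + l - 2 - 2 * j)%N by lia.
  by have -> : (m - (m - l + 1 + j) = l - 1 - j)%N by lia.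
by have -> : (m - l + 1 + j <= m)%N = false by lia.
Qed.

Lemma Zsum_nseq1_mul_nseqN1 vs n m l : {in vs, forall v, v != 0} -> size vs = n.-1 ->
  (m < n)%N -> (l <= m)%N ->
  Zsum vs (nseq m 1%Z) * Zsum vs (nseq l (-1)%Z) =
  ('C(n - m + l - 1, n - m - 1))%:R * Zsum vs (nseq (m - l) 1%Z)
  + (\prod_(v <- vs) v)
    * \sum_(0 <= j < n - m - 1)
        (let a : int := (n%:Z - m%:Z + l%:Z - 3 - 2 * j%:Z)%R in
         let b : int := (l%:Z - 1 - j%:Z)%R in
         if (a < 0)%R || (b < 0)%R then 0
         else ('C(`|a|%N, `|b|%N))%:R
              * Ysum vs (nseq (m - l + 1 + j) 2%Z ++ nseq `|a|%N 1%Z)).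
Proof.
move=> Hnz; case: n => [|N] //= HN HmN Hlm.
have HlN : (l <= size vs)%N by rewrite HN; apply: leq_trans Hlm _.
rewrite (Zsum_nseqN1 Hnz HlN) HN mulrCA (Zsum_nseq1_mul vs (N - l) HmN).
set P := \prod_(v <- vs) v.
have -> : (N.+1 - m - 1 = N - m)%N by lia.
have -> : (N.+1 - m + l - 1 = N - m + l)%N by lia.
rewrite -(big_mkord xpredT
  (fun i => (pieri_coef m (N - l) i)%:R * Ysum21 vs i (m + (N - l) - 2 * i))).
rewrite (big_cat_nat _ (n := (m - l)%N)) //=; last by lia.
rewrite [X in P * (X + _)]big_nat_cond big1 ?add0r => [|i /andP[/andP[_ Hi] _]]; last first.
  by rewrite Ysum21_oversize ?mulr0 // HN; lia.
rewrite big_ltn; last by lia.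
rewrite mulrDr; congr (_ + _).
  rewrite mulrCA Ysum21_full //; last by rewrite HN; lia.
  rewrite /pieri_coef; have -> : (m - l <= m)%N && (m - l <= N - l)%N by lia.
  have -> : (m + (N - l) - 2 * (m - l) = N - m + l)%N by lia.
  by rewrite subKn // -bin_sub ?leq_addl // addnK.
rewrite -{1}[(m - l).+1]add0n big_addn (big_cat_nat _ (n := (N - m)%N)) //=; last by lia.
rewrite [X in _ + X]big_nat_cond [X in _ + X]big1 ?addr0 => [|j /andP[/andP[Hj _] _]]; last first.
  rewrite /pieri_coef; have -> : (j + (m - l).+1 <= N - l)%N = false by lia.
  by rewrite andbF mul0r.
congr (P * _); apply: eq_big_nat => j /andP[_ Hj].
have -> : (j + (m - l).+1 = m - l + 1 + j)%N by lia.
rewrite pieri_coef_tail // -Ysum_nseq21.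
have [Hjl|Hlj] := ltnP j l; last first.
  have -> : ((l%:Z - 1 - j%:Z)%R < 0)%R by lia.
  by rewrite orbT mul0r.
have -> : ((N.+1%:Z - m%:Z + l%:Z - 3 - 2 * j%:Z)%R < 0)%R = false by lia.
have -> : ((l%:Z - 1 - j%:Z)%R < 0)%R = false by lia.
have -> : `|(N.+1%:Z - m%:Z + l%:Z - 3 - 2 * j%:Z)%R|%N = (N - m + l - 2 - 2 * j)%N by lia.
have -> : `|(l%:Z - 1 - j%:Z)%R|%N = (l - 1 - j)%N by lia.
by have -> : (m + (N - l) - 2 * (m - l + 1 + j) = N - m + l - 2 - 2 * j)%N by lia.
Qed.
End Zsums.

Section RootsOfUnity.
Variable R : realType.
Local Open Scope complex_scope.

Lemma zetaX_cos_sin (n i : nat) : zeta R n ^+ i =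
  (cos (i%:R * (2 * pi / n%:R))) +i* (sin (i%:R * (2 * pi / n%:R))).
Proof.
elim: i => [|i IH]; first by rewrite expr0 mul0r cos0 sin0.
rewrite exprS IH /zeta; set t := 2 * pi / n%:R.
have -> : i.+1%:R * t = t + i%:R * t by rewrite -addn1 natrD mulrDl mul1r addrC.
by rewrite cosD sinD [sin t * cos _ + _]addrC.
Qed.

(* If zeta^i = 1 then cos(2y) = 1 for y = i pi / n in (0, pi), forcing sin y = 0. *)
Lemma one_sub_zetaX_neq0 (n i : nat) : (0 < i < n)%N -> 1 - zeta R n ^+ i != 0.
Proof.
move=> /andP[Hi Hn]; rewrite subr_eq0 eq_sym zetaX_cos_sin.
apply/negP => /eqP[Hc _].
pose y : R := i%:R * pi / n%:R.
have Hy : i%:R * (2 * pi / n%:R) = y *+ 2.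
  by rewrite /y mulr2n; field; rewrite pnatr_eq0 -lt0n; lia.
have Hcos2 : cos y ^+ 2 = 1.
  by move: Hc; rewrite Hy cos_mulr2n mulr2n => /eqP; rewrite subr_eq => /eqP; lra.
have Hsin : sin y = 0.
  apply: cos1sin0; move/eqP: Hcos2; rewrite sqrf_eq1 => /orP[] /eqP ->.
  - by rewrite normr1.
  - by rewrite normrN normr1.
have : 0 < sin y.
  apply: sin_gt0_pi; apply/andP; split.
    by rewrite /y divr_gt0 // ?mulr_gt0 ?pi_gt0 // ltr0n //; lia.
  rewrite /y ltr_pdivrMr ?ltr0n; last by lia.
  by rewrite mulrC ltr_pM2l ?pi_gt0 // ltr_nat.
by rewrite Hsin ltxx.
Qed.

Definition one_sub_zetaX (n : nat) : seq R[i] := [seq 1 - zeta R n ^+ r | r <- iota 1 n.-1].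

Lemma one_sub_zetaX_nz n : {in one_sub_zetaX n, forall v, v != 0}.
Proof.
move=> v /mapP[r]; rewrite mem_iota => /andP[Hr1 Hr2] ->.
by apply: one_sub_zetaX_neq0; apply/andP; split; lia.
Qed.

Lemma Zaux_Zsum n lo s :
  Zaux R n lo s = Zsum [seq 1 - zeta R n ^+ r | r <- iota lo (n - lo)] s.
Proof.
move Hk: (n - lo)%N => k; elim: k lo s Hk => [|k IH] lo [|a s] Hk //=.
- by rewrite big_geq //; lia.
- by rewrite big_ltn; [rewrite (IH lo.+1 s) -?(IH lo.+1 (a :: s)) //|]; lia.
Qed.

Lemma Zn_Zsum n s : Zn R n s = Zsum (one_sub_zetaX n) s.
Proof. by rewrite /Zn Zaux_Zsum subn1. Qed.

Lemma Yn_Ysum n s : Yn R n s = Ysum (one_sub_zetaX n) s.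
Proof. by apply: eq_bigr => t _; rewrite Zn_Zsum. Qed.

End RootsOfUnity.

Theorem proposition1 (R : realType) (n m l : nat) (hm : (m < n)%N) (hl : (l <= m)%N) :
  Zn R n (nseq m 1%Z) * Zn R n (nseq l (-1)%Z) =
  ('C(n - m + l - 1, n - m - 1))%:R * Zn R n (nseq (m - l) 1%Z)
  + (\prod_(1 <= r < n) (1 - zeta R n ^+ r))
    * \sum_(0 <= j < n - m - 1)
        (let a : int := (n%:Z - m%:Z + l%:Z - 3 - 2 * j%:Z)%R in
         let b : int := (l%:Z - 1 - j%:Z)%R in
         if (a < 0)%R || (b < 0)%R then 0
         else ('C(`|a|%N, `|b|%N))%:R
              * Yn R n (nseq (m - l + 1 + j) 2%Z ++ nseq `|a|%N 1%Z)).
Proof.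
under [\sum_(_ <= _ < _) _]eq_bigr => j _ do (cbv zeta; rewrite Yn_Ysum).
have -> : \prod_(1 <= r < n) (1 - zeta R n ^+ r) = \prod_(v <- one_sub_zetaX R n) v.
  by rewrite big_map /index_iota subn1.
rewrite !Zn_Zsum; apply: Zsum_nseq1_mul_nseqN1 => //.
- exact: one_sub_zetaX_nz.
- by rewrite size_map size_iota.
Qed.
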